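(* Let $G$ be a simple undirected graph (no loops, no multiple edges) with vertex set $\{v_1,\dots,v_n\}$ and $m$ edges, and let $\tau(G;x)=d_2(xI_n-A(G))$, where $A(G)$ is the adjacency matrix of $G$. Then $$(m-n)\,\tau(G;x)+x\,\tau'(G;x)=\sum_{v_sv_t\in E(G)}\big[\tau(G-v_sv_t;x)+\tau(G-v_s-v_t;x)\big],$$ where $\tau'$ is the derivative with respect to $x$, $G-v_sv_t$ is $G$ with the edge $v_sv_t$ deleted, and $G-v_s-v_t$ is $G$ with the vertices $v_s,v_t$ deleted (so $\tau(G-v_s-v_t;x)=d_2(xI_{n-2}-A(G-v_s-v_t))$).
   Context: For an $k\times k$ matrix $M=(m_{ij})$ ($k\ge 2$), the second immanant is $d_2(M)=\sum_{\sigma\in S_k}\chi_2(\sigma)\prod_{s=1}^k m_{s\sigma(s)}$, where $\chi_2$ is the irreducible character of $S_k$ corresponding to the partition $(2,1^{k-2})$. It satisfies $d_2(X)=\sum_{i=1}^k x_{ii}\det(X(i))-\det(X)$, where $X(i)$ is $X$ with row and column $i$ deleted; for matrices of order less than $2$, $d_2$ is understood via this identity, with the determinant of the empty matrix equal to $1$. *)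

From HB Require Import structures.
From mathcomp Require Import all_boot all_order all_algebra all_fingroup.
Set Implicit Arguments. Unset Strict Implicit. Unset Printing Implicit Defensive.
Import GRing.Theory.
Local Open Scope ring_scope.

(* chi_2(sigma) for the partition (2,1^{k-2}) of k:
   chi_2 = sign * (standard character) = sgn(sigma) * (#fix(sigma) - 1).
   For k = 0, 1 this formula reproduces the convention
   d_2(X) = sum_i x_ii det X(i) - det X  (giving -1 and 0 resp.). *)
Definition chi2 (k : nat) (s : 'S_k) : int :=
  (-1) ^+ s * ((#|[set i | s i == i]|)%:Z - 1).

Definition d2 (R : comNzRingType) (k : nat) (M : 'M[R]_k) : R :=
  \sum_(s : 'S_k) (chi2 s)%:~R * \prod_(i < k) M i (s i).

Definition adj (n : nat) (e : rel 'I_n) : 'M[int]_n :=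
  \matrix_(i, j) (e i j)%:R.

Definition tau (n : nat) (A : 'M[int]_n) : {poly int} :=
  d2 ('X%:M - map_mx polyC A).

Definition edel (n : nat) (e : rel 'I_n) (s t : 'I_n) : rel 'I_n :=
  fun i j => e i j && ~~ (((i == s) && (j == t)) || ((i == t) && (j == s))).

Definition vrest (n : nat) (s t : 'I_n) : {set 'I_n} :=
  [set i | (i != s) && (i != t)].

Definition vdel_adj (n : nat) (e : rel 'I_n) (s t : 'I_n)
  : 'M[int]_#|vrest s t| :=
  \matrix_(i, j) (e (enum_val i) (enum_val j))%:R.

Definition nedges (n : nat) (e : rel 'I_n) : nat :=
  #|[set p : 'I_n * 'I_n | (p.1 < p.2)%N && e p.1 p.2]|.

(* Expand tau(G; x) = d_2(xI - A) over permutations s.  Since A has a zero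
   diagonal, the term of s is chi_2(s) x^(fix s) times the product of the
   -a_{i,s(i)} over the points moved by s; it vanishes unless every moved
   point i is adjacent to s(i), and x d/dx multiplies it by fix s.
   Deleting the edge uv keeps exactly the terms of the s with s(u) <> v and
   s(v) <> u.  Deleting the vertices u and v gives, up to the sign of
   chi_2(s) flipped by the transposition (u v), the terms of the s that swap
   u and v.  So on the right the term of s is counted
   sum_{uv in E} (1 - [s(u) = v] - [s(v) = u]) = m - #moved(s) = m - n + fix s
   times, as on the left. *)

From HB Require Import structures.
From mathcomp Require Import all_boot all_order all_algebra all_fingroup.
From mathcomp Require Import ring.
Set Implicit Arguments.
Unset Strict Implicit.
Unset Printing Implicit Defensive.
Import GRing.Theory.
Local Open Scope ring_scope.

Section ExtendPerm.
Variables (T : finType) (D : {set T}).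
Implicit Types (s t : 'S_#|D|) (x : T) (j : 'I_#|D|).

Variant enum_val_spec x : bool -> Type :=
  | EnumVal j of x = enum_val j : enum_val_spec x true
  | NotInSet of x \notin D : enum_val_spec x false.

Lemma enum_val_caseP x : enum_val_spec x (x \in D).
Proof.
case: (boolP (x \in D)) => [xD|]; last exact: NotInSet.
by apply: (@EnumVal x (enum_rank_in xD x)); rewrite enum_rankK_in.
Qed.

Definition ext_perm_fun s x : T :=
  if [pick j | enum_val j == x] is Some j then enum_val (s j) else x.

Lemma ext_perm_fun_val s j : ext_perm_fun s (enum_val j) = enum_val (s j).
Proof.
rewrite /ext_perm_fun; case: pickP => [k /eqP/enum_val_inj -> // | /(_ j)].
by rewrite eqxx.
Qed.

Lemma ext_perm_fun_out s x : x \notin D -> ext_perm_fun s x = x.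
Proof.
by rewrite /ext_perm_fun; case: pickP => // j /eqP <-; rewrite enum_valP.
Qed.

Lemma ext_perm_fun_inj s : injective (ext_perm_fun s).
Proof.
move=> x y.
case: (enum_val_caseP x) => [j ->|xD]; case: (enum_val_caseP y) => [k ->|yD];
  rewrite ?ext_perm_fun_val ?ext_perm_fun_out //.
- by move/enum_val_inj/perm_inj ->.
- by move=> yE; rewrite -yE enum_valP in yD.
- by move=> xE; rewrite xE enum_valP in xD.
Qed.

Definition ext_perm s : {perm T} := perm (@ext_perm_fun_inj s).

Lemma ext_perm_val s j : ext_perm s (enum_val j) = enum_val (s j).
Proof. by rewrite permE ext_perm_fun_val. Qed.

Lemma ext_perm_out s x : x \notin D -> ext_perm s x = x.
Proof. by rewrite permE; apply: ext_perm_fun_out. Qed.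

Lemma ext_perm_inj : injective ext_perm.
Proof.
move=> s t st; apply/permP => j.
by apply: enum_val_inj; rewrite -!ext_perm_val st.
Qed.

Lemma ext_perm_on s : perm_on D (ext_perm s).
Proof.
by apply/subsetP => x; apply: contraR => xD; rewrite ext_perm_out.
Qed.

Lemma im_ext_perm : ext_perm @: setT = [set u | perm_on D u].
Proof.
apply/setP => u; rewrite inE; apply/imsetP/idP => [[s _ ->]|uD].
  exact: ext_perm_on.
have uDj j : u (enum_val j) \in D by rewrite perm_closed ?enum_valP.
pose f j := enum_rank_in (uDj j) (u (enum_val j)).
have fE j : enum_val (f j) = u (enum_val j) by rewrite enum_rankK_in.
have f_inj : injective f.
  by move=> j k /(congr1 enum_val); rewrite !fE => /perm_inj/enum_val_inj.
exists (perm f_inj) => //; apply/permP => x.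
case: (enum_val_caseP x) => [j ->|xD]; first by rewrite ext_perm_val permE fE.
by rewrite ext_perm_out // (out_perm uD).
Qed.

Lemma ext_perm1 : ext_perm 1 = 1%g.
Proof.
apply/permP => x; rewrite perm1.
by case: (enum_val_caseP x) => [j ->|xD];
  rewrite ?ext_perm_val ?ext_perm_out ?perm1.
Qed.

Lemma ext_permM : {morph ext_perm : s t / (s * t)%g}.
Proof.
move=> s t; apply/permP => x; rewrite permM.
by case: (enum_val_caseP x) => [j ->|xD];
  rewrite ?ext_perm_val ?ext_perm_out ?permM.
Qed.

Lemma ext_perm_tperm j k :
  ext_perm (tperm j k) = tperm (enum_val j) (enum_val k).
Proof.
apply/permP => x; case: (enum_val_caseP x) => [i ->|xD].
  by rewrite ext_perm_val (inj_tperm _ _ _ enum_val_inj).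
rewrite ext_perm_out // tpermD //; apply: contraNneq xD => <-; exact: enum_valP.
Qed.

Lemma odd_ext_perm s : odd_perm (ext_perm s) = odd_perm s.
Proof.
have [ts -> dts] := prod_tpermP s.
rewrite (big_morph _ ext_permM ext_perm1) odd_perm_prod //.
under eq_bigr do rewrite ext_perm_tperm.
rewrite -(big_map (fun p => (enum_val p.1, enum_val p.2)) xpredT
   (fun p => tperm p.1 p.2)) odd_perm_prod ?size_map //.
rewrite all_map; apply: sub_all dts => -[j k].
by rewrite /dpair /= (inj_eq enum_val_inj).
Qed.

Lemma card_fix_ext_perm s :
  #|[set x in D | ext_perm s x == x]| = #|[set j | s j == j]|.
Proof.
rewrite -(card_imset _ enum_val_inj); apply: eq_card => x; rewrite inE.
case: (enum_val_caseP x) => [j ->|xD] /=.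
  rewrite ext_perm_val (inj_eq enum_val_inj).
  by rewrite (mem_imset _ _ enum_val_inj) inE.
by apply/esym/imsetP => -[j _ xE]; rewrite xE enum_valP in xD.
Qed.

End ExtendPerm.

Definition d2_term (R : comNzRingType) k (M : 'M[R]_k) (s : 'S_k) : R :=
  (chi2 s)%:~R * \prod_i M i (s i).

Lemma d2E (R : comNzRingType) k (M : 'M[R]_k) : d2 M = \sum_s d2_term M s.
Proof. by []. Qed.

Lemma prod_perm_mask (R : comPzSemiRingType) k (M N : 'M[R]_k) (Z : rel 'I_k)
    (s : 'S_k) :
  (forall i j, N i j = if Z i j then 0 else M i j) ->
  \prod_i N i (s i) = (~~ [exists i, Z i (s i)])%:R * \prod_i M i (s i).
Proof.
move=> NE; case: existsP => [[i Zi]|noZ] /=.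
  by rewrite mul0r (bigD1 i) //= NE Zi mul0r.
rewrite mul1r; apply: eq_bigr => i _; rewrite NE ifN //.
by apply/negP => Zi; apply: noZ; exists i.
Qed.

Lemma d2_mask (R : comNzRingType) k (M N : 'M[R]_k) (Z : rel 'I_k) :
  (forall i j, N i j = if Z i j then 0 else M i j) ->
  d2 N = \sum_s d2_term M s * (~~ [exists i, Z i (s i)])%:R.
Proof.
by move=> NE; apply: eq_bigr => s _; rewrite (prod_perm_mask _ NE) mulrCA mulrC.
Qed.

Section SwapTerms.
Variables (n : nat) (a b : 'I_n).
Hypothesis ab : a != b.
Local Notation D := (vrest a b).

Lemma perm_on_vrest (u : 'S_n) : perm_on D u = (u a == a) && (u b == b).
Proof.
apply/idP/andP => [uD|[/eqP ua /eqP ub]].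
  by rewrite !(out_perm uD) // inE eqxx ?andbF.
apply/subsetP => x ux; rewrite inE.
by apply/andP; split; apply: contraNneq ux => ->; rewrite ?ua ?ub.
Qed.

Definition swap_ext_perm (s : 'S_#|D|) : 'S_n := (tperm a b * ext_perm s)%g.

Lemma swap_ext_perm_a s : swap_ext_perm s a = b.
Proof. by rewrite permM tpermL ext_perm_out // inE eqxx /= ?andbF. Qed.

Lemma swap_ext_perm_b s : swap_ext_perm s b = a.
Proof. by rewrite permM tpermR ext_perm_out // inE eqxx /= ?andbF. Qed.

Lemma swap_ext_perm_in s x : x \in D -> swap_ext_perm s x = ext_perm s x.
Proof. by rewrite inE permM => /andP[xa xb]; rewrite tpermD // eq_sym. Qed.

Lemma chi2_swap_ext_perm s : chi2 (swap_ext_perm s) = - chi2 s.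
Proof.
have fixE : [set x | swap_ext_perm s x == x] = [set x in D | ext_perm s x == x].
  apply/setP => x; rewrite inE [RHS]inE; have [xD|xD] := boolP (x \in D).
    by rewrite swap_ext_perm_in.
  move: xD; rewrite inE negb_and !negbK => /orP[] /eqP ->.
    by rewrite swap_ext_perm_a eq_sym (negPf ab).
  by rewrite swap_ext_perm_b (negPf ab).
rewrite /chi2 fixE card_fix_ext_perm odd_mul_tperm ab odd_ext_perm.
by case: (odd_perm s); rewrite /= ?expr0 ?expr1 ?mulN1r ?mul1r ?opprK.
Qed.

Lemma prod_swap_ext_perm (R : comPzSemiRingType) (F : 'I_n -> 'I_n -> R) s :
  \prod_i F i (swap_ext_perm s i)
    = F a b * F b a * \prod_j F (enum_val j) (enum_val (s j)).
Proof.
rewrite (bigD1 a) // (bigD1 b) 1?eq_sym //=.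
rewrite swap_ext_perm_a swap_ext_perm_b mulrA.
congr (_ * _); rewrite (eq_bigl (mem D)) => [|x]; last by rewrite !inE andbC.
rewrite big_enum_val; apply: eq_bigr => j _.
by rewrite swap_ext_perm_in ?enum_valP // ext_perm_val.
Qed.

Lemma d2_swap_terms (R : comNzRingType) (M : 'M[R]_n) :
  \sum_(s : 'S_n | (s a == b) && (s b == a)) d2_term M s
    = - (M a b * M b a) * d2 (mxsub enum_val enum_val M : 'M_#|D|).
Proof.
rewrite (reindex_inj (mulgI (tperm a b))) /=.
rewrite (eq_bigl (fun u => u \in ext_perm (D := D) @: setT)) => [|u];
  last first.
  by rewrite im_ext_perm inE perm_on_vrest !permM tpermL tpermR andbC.
rewrite big_imset /=; last by move=> s t _ _; apply: ext_perm_inj.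
rewrite /d2 mulr_sumr; apply: eq_big => [s|s _]; first by rewrite inE.
rewrite /d2_term -/(swap_ext_perm s) chi2_swap_ext_perm prod_swap_ext_perm.
under [in RHS]eq_bigr do rewrite mxE.
by rewrite intrN; ring.
Qed.

End SwapTerms.

Lemma mulX_derivXn (R : nzSemiRingType) m :
  'X * ('X^m)^`() = 'X^m *+ m :> {poly R}.
Proof.
rewrite derivXn; case: m => [|m]; first by rewrite mulr0n mulr0.
by rewrite mulrnAr -exprS.
Qed.

Section CharPolyPerm.
Variables (R : comNzRingType) (k : nat) (A : 'M[R]_k).
Implicit Type s : 'S_k.

Lemma d2_term_char_poly_mx_eq0 s i :
  s i != i -> A i (s i) = 0 -> d2_term (char_poly_mx A) s = 0.
Proof.
move=> si Ai0; rewrite /d2_term (bigD1 i) //= !mxE eq_sym (negPf si) Ai0.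
by rewrite subr0 mul0r mulr0.
Qed.

Hypothesis A_diag0 : forall i, A i i = 0.

Lemma prod_char_poly_mx_perm s :
  \prod_i char_poly_mx A i (s i)
    = (\prod_(i | s i != i) - A i (s i)) *: 'X^#|[set i | s i == i]|.
Proof.
have fixE :
    \prod_(i | s i == i) char_poly_mx A i (s i) = 'X^#|[set i | s i == i]|.
  rewrite -prodr_const; apply: eq_big => i; first by rewrite inE.
  by move=> /eqP si; rewrite !mxE si eqxx A_diag0 subr0.
have movE : \prod_(i | s i != i) char_poly_mx A i (s i)
    = (\prod_(i | s i != i) - A i (s i))%:P.
  rewrite rmorph_prod; apply: eq_bigr => i si.
  by rewrite !mxE eq_sym (negPf si) sub0r rmorphN.
by rewrite (bigID (fun i => s i == i)) /= fixE movE mulrC mul_polyC.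
Qed.

Lemma X_deriv_d2_term s :
  'X * (d2_term (char_poly_mx A) s)^`()
    = d2_term (char_poly_mx A) s *+ #|[set i | s i == i]|.
Proof.
rewrite /d2_term prod_char_poly_mx_perm mulrzl scalerMzl derivZ -scalerAr.
by rewrite mulX_derivXn scalerMnr.
Qed.

End CharPolyPerm.

Lemma big_ord_pairs_sym (R : Type) (idx : R) (op : Monoid.com_law idx) n
    (P : rel 'I_n) (F : 'I_n -> 'I_n -> R) :
  symmetric P ->
  \big[op/idx]_(p : 'I_n * 'I_n | (p.1 < p.2)%N && P p.1 p.2)
      op (F p.1 p.2) (F p.2 p.1)
    = \big[op/idx]_(p : 'I_n * 'I_n | (p.1 != p.2) && P p.1 p.2) F p.1 p.2.
Proof.
move=> Psym.
have swapK : involutive (fun p : 'I_n * 'I_n => (p.2, p.1)) by case.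
rewrite big_split /= [RHS](bigID (fun p : 'I_n * 'I_n => (p.1 < p.2)%N)) /=.
rewrite [X in op _ X](reindex_inj (inv_inj swapK)) /=.
congr (op _ _); apply: eq_bigl => -[i j] /=; rewrite -val_eqE /= neq_ltn;
  last rewrite [P j i]Psym; by case: ltngtP; rewrite /= ?andbT ?andbF.
Qed.

Section Graph.
Variables (n : nat) (e : rel 'I_n).
Hypotheses (e_sym : symmetric e) (e_irr : irreflexive e).
Local Notation M := (char_poly_mx (adj e)).
Implicit Type s : 'S_n.

Lemma card_moved_edges s : (forall i, s i != i -> e i (s i)) ->
  (\sum_(p : 'I_n * 'I_n | (p.1 < p.2)%N && e p.1 p.2)
     ((s p.1 == p.2) + (s p.2 == p.1)))%N
    = #|[set i | s i != i]|.
Proof.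
move=> s_edges.
rewrite (big_ord_pairs_sym _ (fun i j => nat_of_bool (s i == j)) e_sym).
rewrite (eq_bigr (fun p : 'I_n * 'I_n => if s p.1 == p.2 then 1 else 0)%N);
  last by move=> p _; case: eqP.
rewrite -big_mkcondr sum1dep_card.
have graph_inj : injective (fun i => (i, s i)) by move=> i j [].
rewrite -(card_imset _ graph_inj); apply: eq_card => -[i j]; rewrite inE.
apply/idP/imsetP => [/andP[/andP[ij _] /eqP sij]|[k]].
  by exists i; rewrite ?inE sij // eq_sym.
by rewrite inE => sk [-> ->] /=; rewrite eqxx andbT eq_sym sk s_edges.
Qed.

Lemma tau_edel a b : a != b ->
  tau (adj (edel e a b))
    = \sum_s d2_term M s * (~~ ((s a == b) || (s b == a)))%:R.
Proof.
move=> ab; pose Z i j := ((i == a) && (j == b)) || ((i == b) && (j == a)).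
rewrite /tau (@d2_mask _ _ M _ Z) => [|i j]; last first.
  rewrite !mxE /edel -/(Z i j); case: (boolP (Z i j)) => [|_].
    case/orP=> /andP[/eqP-> /eqP->]; rewrite andbF subr0 ?(negPf ab) //.
    by rewrite eq_sym (negPf ab).
  by rewrite andbT.
apply: eq_bigr => s _; congr (_ * (~~ _)%:R).
apply/existsP/orP => [[i /orP[] /andP[/eqP-> /eqP->]]|[/eqP sab|/eqP sba]];
  [by left|by right|exists a|exists b]; by rewrite /Z ?sab ?sba !eqxx ?orbT.
Qed.

Lemma tau_vdel a b : e a b ->
  tau (vdel_adj e a b) = - \sum_s d2_term M s * ((s a == b) && (s b == a))%:R.
Proof.
move=> eab; have ab : a != b by apply: contraTneq eab => ->; rewrite e_irr.
have subE : 'X%:M - map_mx polyC (vdel_adj e a b) = mxsub enum_val enum_val M.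
  by apply/matrixP => i j; rewrite !mxE (inj_eq enum_val_inj).
rewrite (eq_bigr (fun s =>
    if (s a == b) && (s b == a) then d2_term M s else 0));
  last by move=> s _; case: ifP; rewrite ?mulr1 ?mulr0.
rewrite -big_mkcond d2_swap_terms // /tau subE !mxE eab e_sym eab (negPf ab).
by rewrite eq_sym (negPf ab) /= sub0r mulrNN mulr1 mulN1r opprK.
Qed.

Lemma d2_term_balance s :
  ((nedges e)%:Z - n%:Z)%:P * d2_term M s + 'X * (d2_term M s)^`()
    = \sum_(p : 'I_n * 'I_n | (p.1 < p.2)%N && e p.1 p.2)
        d2_term M s * ((~~ ((s p.1 == p.2) || (s p.2 == p.1)))%:R
                       - ((s p.1 == p.2) && (s p.2 == p.1))%:R).
Proof.
have [w0|wN0] := eqVneq (d2_term M s) 0.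
  by rewrite w0 deriv0 !mulr0 addr0 big1 // => p _; rewrite mul0r.
have s_edges i : s i != i -> e i (s i).
  move=> si; apply: contraNT wN0 => nei.
  by apply/eqP/(d2_term_char_poly_mx_eq0 si); rewrite mxE (negPf nei).
have balance (x y : bool) :
  (~~ (x || y))%:R - (x && y)%:R = 1 - (x + y)%N%:R :> {poly int}.
  by case: x; case: y => /=; ring.
under eq_bigr do rewrite balance.
rewrite X_deriv_d2_term => [|i]; last by rewrite mxE e_irr.
rewrite -mulr_sumr sumrB sumr_const -natr_sum card_moved_edges //.
have card_fix_moved : (#|[set i | s i == i]| + #|[set i | s i != i]|)%N = n.
  rewrite -[RHS]card_ord -(cardsC [set i | s i == i]); congr (_ + _)%N.
  by apply: eq_card => i; rewrite !inE.
rewrite -[in n%:Z]card_fix_moved /nedges cardsE.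
rewrite -!natz rmorphB /= !polyC_natr natrD.
by rewrite -mulr_natr; ring.
Qed.

End Graph.

Theorem lemma2p5 (n : nat) (e : rel 'I_n)
    (e_sym : symmetric e) (e_irr : irreflexive e) :
  ((nedges e)%:Z - n%:Z)%:P * tau (adj e) + 'X * (tau (adj e))^`()
  = \sum_(p : 'I_n * 'I_n | (p.1 < p.2)%N && e p.1 p.2)
      (tau (adj (edel e p.1 p.2)) + tau (vdel_adj e p.1 p.2)).
Proof.
under eq_bigr => p /andP[lt_p ep].
  have p12 : p.1 != p.2 by rewrite -val_eqE neq_ltn lt_p.
  rewrite tau_edel // tau_vdel // -sumrB.
  under eq_bigr do rewrite -mulrBr.
over.
rewrite exchange_big /tau d2E mulr_sumr linear_sum mulr_sumr -big_split /=.
by apply: eq_bigr => s _; apply: d2_term_balance.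
Qed.
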